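(* For every $n\ge0$, the simplex $\mathbf{\Delta}^n$ is fibrant in the Thomason model structure on $\mathbf{Cpx}$, i.e. $\mathrm{Ex}^2\mathrm{Sing}(\mathbf{\Delta}^n)$ is a Kan complex.
   Context: A simplicial complex consists of a vertex set and a collection of nonempty finite subsets (simplices) containing all singletons and closed under nonempty subsets; maps are vertex functions preserving simplices; $\mathbf{Cpx}$ is the category. $\mathbf{\Delta}^n$ is the complex on $\{0,\dots,n\}$ in which every nonempty subset is a simplex. $\mathrm{Sing}(K)_n=\mathbf{Cpx}(\mathbf{\Delta}^n,K)$ with simplicial operators by precomposition; $\mathrm{Ex}$ is the right adjoint of barycentric subdivision of simplicial sets. In the Thomason model structure on $\mathbf{Cpx}$ a map $f$ is a fibration iff $\mathrm{Ex}^2\mathrm{Sing}(f)$ is a Kan fibration. *)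

From HB Require Import structures.
From mathcomp Require Import all_boot all_order.
From mathcomp Require Import finmap.

Set Implicit Arguments.
Unset Strict Implicit.
Unset Printing Implicit Defensive.

Local Open Scope fset_scope.

Record cpx := Cpx {
  vert : choiceType;
  simplex : {fset vert} -> Prop;
  simplex_neq0 : forall s, simplex s -> s != fset0;
  simplex1 : forall v : vert, simplex [fset v];
  simplex_sub : forall s t, simplex s -> t `<=` s -> t != fset0 -> simplex t
}.

Definition simplicial (K L : cpx) (f : vert K -> vert L) : Prop :=
  forall s, simplex s -> simplex [fset f x | x in s].
Arguments simplicial : clear implicits.

Lemma DeltaC_sub (n : nat) (s t : {fset 'I_n.+1}) :
  s != fset0 -> t `<=` s -> t != fset0 -> t != fset0.
Proof. by []. Qed.

Lemma DeltaC_1 (n : nat) (v : 'I_n.+1) : [fset v] != fset0.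
Proof. by apply/fset0Pn; exists v; rewrite inE. Qed.

Definition DeltaC (n : nat) : cpx :=
  @Cpx ('I_n.+1 : choiceType) (fun s => s != fset0) (fun s h => h)
       (@DeltaC_1 n) (@DeltaC_sub n).

(* Simplicial operators [m] -> [n]: monotone maps {0..m} -> {0..n}. *)
Definition mono (m n : nat) :=
  {f : 'I_m.+1 -> 'I_n.+1 | forall i j : 'I_m.+1, i <= j -> f i <= f j}.

(* A simplicial set: sets X_n and a (contravariant) action of simplicial
   operators; functoriality is stated separately (is_sset). *)
Record sset := SSet {
  sobj : nat -> Type;
  sact : forall m n, mono m n -> sobj n -> sobj m
}.

Definition mono_id (n : nat) : mono n n := @exist _ (fun f : 'I_n.+1 -> 'I_n.+1 => forall i j : 'I_n.+1, i <= j -> f i <= f j) id (fun i j h => h).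

Lemma mono_comp_proof (k m n : nat) (a : mono k m) (b : mono m n) :
  forall i j : 'I_k.+1, i <= j -> (sval b \o sval a) i <= (sval b \o sval a) j.
Proof. by move=> i j h; apply: (svalP b); apply: (svalP a). Qed.

Definition mono_comp (k m n : nat) (a : mono k m) (b : mono m n) : mono k n :=
  exist _ (sval b \o sval a) (@mono_comp_proof k m n a b).

Definition is_sset (X : sset) : Prop :=
  (forall n (x : sobj X n), sact (mono_id n) x = x) /\
  (forall k m n (a : mono k m) (b : mono m n) (x : sobj X n),
      sact (mono_comp a b) x = sact a (sact b x)).

Definition natural (A X : sset) (f : forall m, sobj A m -> sobj X m) : Prop :=
  forall m m' (a : mono m' m) (x : sobj A m), f m' (sact a x) = sact a (f m x).

Lemma Sing_act_proof (K : cpx) (m n : nat) (a : mono m n)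
    (f : {g : 'I_n.+1 -> vert K | simplicial (DeltaC n) K g}) :
  simplicial (DeltaC m) K (sval f \o sval a).
Proof.
move=> s /= hs; rewrite (imfset_comp _ (sval a) (sval f)).
apply: (svalP f) => /=; apply/fset0Pn.
case/fset0Pn: hs => x hx; exists (sval a x).
by rewrite in_imfset.
Qed.

Definition Sing (K : cpx) : sset :=
  @SSet (fun n => {g : 'I_n.+1 -> vert K | simplicial (DeltaC n) K g})
        (fun m n a f => exist _ (sval f \o sval a) (Sing_act_proof a f)).

(* sd Delta^n is the nerve of the poset of nonempty subsets of {0..n}
   ordered by inclusion: its m-simplices are chains c_0 <= ... <= c_m. *)
Definition is_chain (n m : nat) (c : {ffun 'I_m.+1 -> {set 'I_n.+1}}) : bool :=
  [forall j, c j != set0] &&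
  [forall i : 'I_m.+1, forall j : 'I_m.+1, (i <= j) ==> (c i \subset c j)].

Definition chain (n m : nat) := {c : {ffun 'I_m.+1 -> {set 'I_n.+1}} | is_chain c}.

Lemma sd_act_proof (n m m' : nat) (a : mono m' m) (c : chain n m) :
  is_chain [ffun j => sval c (sval a j)].
Proof.
case: c => c /= /andP[/forallP h0 /forallP h1].
apply/andP; split; apply/forallP => i; rewrite ?ffunE //.
apply/forallP => j; rewrite !ffunE; apply/implyP => hij.
by move: (h1 (sval a i)) => /forallP /(_ (sval a j)) /implyP; apply; apply: (svalP a).
Qed.

Definition sdDelta (n : nat) : sset :=
  @SSet (chain n)
        (fun m m' a c => exist _ [ffun j => sval c (sval a j)] (sd_act_proof a c)).

Lemma sd_map_proof (n' n m : nat) (t : mono n' n) (c : chain n' m) :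
  is_chain [ffun j => sval t @: sval c j].
Proof.
case: c => c /= /andP[/forallP h0 /forallP h1].
apply/andP; split; apply/forallP => i; rewrite ?ffunE.
  case/set0Pn: (h0 i) => x hx; apply/set0Pn; exists (sval t x).
  by apply: imset_f.
apply/forallP => j; rewrite !ffunE; apply/implyP => hij.
apply: imsetS.
by move: (h1 i) => /forallP /(_ j) /implyP; apply.
Qed.

Definition sd_map (n' n m : nat) (t : mono n' n) (c : chain n' m) : chain n m :=
  exist _ [ffun j => sval t @: sval c j] (sd_map_proof t c).

Definition Ex_obj (X : sset) (n : nat) :=
  {f : forall m, sobj (sdDelta n) m -> sobj X m | natural f}.

Lemma Ex_act_proof (X : sset) (n' n : nat) (t : mono n' n) (F : Ex_obj X n) :
  natural (fun m (c : sobj (sdDelta n') m) => sval F m (sd_map t c)).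
Proof.
move=> m m' a c /=; rewrite -(svalP F); congr (sval F _ _).
by apply: val_inj => /=; apply/ffunP => j; rewrite !ffunE.
Qed.

Definition Ex (X : sset) : sset :=
  @SSet (Ex_obj X)
        (fun n' n t F => exist _ (fun m c => sval F m (sd_map t c))
                                 (Ex_act_proof t F)).

Lemma coface_proof (n : nat) (i : 'I_n.+2) :
  forall j k : 'I_n.+1, j <= k -> lift i j <= lift i k.
Proof. by move=> j k h; rewrite /= leq_bump2. Qed.

Definition coface (n : nat) (i : 'I_n.+2) : mono n n.+1 :=
  exist _ (lift i) (@coface_proof n i).

(* A horn Lambda^{n+1}_k -> X is a family x_i in X_n (i <> k) agreeing on
   overlaps of the faces; X is Kan if every horn has a filler. *)
Definition Kan (X : sset) : Prop :=
  forall (n : nat) (k : 'I_n.+2) (x : 'I_n.+2 -> sobj X n),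
    (forall (i j : 'I_n.+2) (m : nat) (a b : mono m n),
        i != k -> j != k ->
        sval (mono_comp a (coface i)) =1 sval (mono_comp b (coface j)) ->
        sact a (x i) = sact b (x j)) ->
    exists y : sobj X n.+1,
      forall i : 'I_n.+2, i != k -> sact (coface i) y = x i.

From HB Require Import structures.
From mathcomp Require Import all_boot all_order.
From mathcomp Require Import finmap zify.
From Stdlib Require Import FunctionalExtensionality ProofIrrelevance.

(* Sing K of a full complex K is 0-coskeletal: its l-simplices are arbitrary
   maps from [l] to the vertices of K. Hence a k-simplex of Ex^2 (Sing K), a map
   sd^2 Delta^k -> Sing K, is an arbitrary assignment of vertices of K to the
   vertices of sd^2 Delta^k, i.e. to the flags of nonempty subsets of [k]; the
   value on any simplex of sd^2 Delta^k is read off from these by naturality.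
   A horn (x_i)_(i != j) is then filled by sending a flag P of subsets of
   [k+1] to the value of x_i at the trace of P on the i-th face, for any i != j
   lying in no member of P. Two such choices i, i' agree because x_i and x_i'
   agree on the common face omitting i and i'; flags without such an i are
   unconstrained. *)

Set Implicit Arguments.
Unset Strict Implicit.
Unset Printing Implicit Defensive.

Lemma sig_eq (A : Type) (P : A -> Prop) (x y : {a : A | P a}) :
  sval x = sval y -> x = y.
Proof. by case: x y => [a pa] [b pb] /=; apply: ProofIrrelevanceTheory.subset_eq_compat. Qed.

Lemma Sing_ext (K : cpx) (l : nat) (g h : sobj (Sing K) l) : sval g =1 sval h -> g = h.
Proof. by move=> gh; apply: sig_eq; apply: functional_extensionality. Qed.

Lemma Ex_ext (X : sset) (n : nat) (F G : sobj (Ex X) n) :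
  (forall m c, sval F m c = sval G m c) -> F = G.
Proof.
move=> FG; apply: sig_eq; apply: functional_extensionality_dep => m.
exact: functional_extensionality.
Qed.

Lemma chain_neq0 (k m : nat) (c : chain k m) (q : 'I_m.+1) : sval c q != set0.
Proof. by case: c => c /= /andP[/forallP]. Qed.

Lemma chain_mono (k m : nat) (c : chain k m) (q q' : 'I_m.+1) :
  q <= q' -> sval c q \subset sval c q'.
Proof. by case: c => c /= /andP[_ /forallP/(_ q)/forallP/(_ q')/implyP]. Qed.

Lemma const_chain_proof (k m : nat) (S : {set 'I_k.+1}) :
  S != set0 -> is_chain [ffun _ : 'I_m.+1 => S].
Proof.
by move=> S0; apply/andP; split; apply/forallP => i; rewrite ?ffunE //;
  apply/forallP => j; rewrite !ffunE; apply/implyP.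
Qed.

Lemma setT_neq0 (k : nat) : [set: 'I_k.+1] != set0.
Proof. by apply/set0Pn; exists ord0; rewrite inE. Qed.

Definition chainT (k m : nat) : chain k m :=
  exist (@is_chain k m) _ (const_chain_proof m (setT_neq0 k)).

(* Junk value [chainT] for [S = set0]. *)
Definition sd_vertex (m : nat) (S : {set 'I_m.+1}) : chain m 0 :=
  insubd (chainT m 0) [ffun => S].

Lemma sd_vertexE (m : nat) (S : {set 'I_m.+1}) :
  S != set0 -> sval (sd_vertex S) = [ffun => S].
Proof. by move=> S0; rewrite val_insubd const_chain_proof. Qed.

Lemma const_mono_proof (l m : nat) (p : 'I_m.+1) :
  forall i j : 'I_l.+1, i <= j -> (fun _ => p) i <= (fun _ => p) j.
Proof. by []. Qed.

Definition const_mono (l m : nat) (p : 'I_m.+1) : mono l m :=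
  exist _ _ (@const_mono_proof l m p).

Section ExSing.

Variable K : cpx.

Definition Ex_at (m : nat) (f : sobj (Ex (Sing K)) m) (S : {set 'I_m.+1}) : vert K :=
  sval (sval f 0 (sd_vertex S)) ord0.

Lemma Ex_Sing_vertexwise (m l : nat) (f : sobj (Ex (Sing K)) m) (d : chain m l)
    (p : 'I_l.+1) :
  sval (sval f l d) p = Ex_at f (sval d p).
Proof.
have /(congr1 (fun g => sval g ord0)) /= <- := svalP f l 0 (const_mono 0 p) d.
congr (sval (sval f 0 _) ord0).
by apply: val_inj; rewrite /= sd_vertexE ?chain_neq0 //; apply/ffunP => q; rewrite !ffunE.
Qed.

Lemma Ex_at_act (m m' : nat) (f : sobj (Ex (Sing K)) m) (a : mono m' m)
    (S : {set 'I_m'.+1}) :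
  S != set0 -> Ex_at (sact a f) S = Ex_at f (sval a @: S).
Proof.
move=> S0; rewrite /Ex_at /=; congr (sval (sval f 0 _) ord0); apply: val_inj => /=.
by rewrite !sd_vertexE ?imset_eq0 //; apply/ffunP => q; rewrite !ffunE.
Qed.

End ExSing.

Section Flags.

Variable T : finType.

Definition is_flag (P : {set {set T}}) : bool :=
  [&& P != set0, set0 \notin P &
      [forall A in P, forall B in P, (A \subset B) || (B \subset A)]].

Variable P : {set {set T}}.
Hypothesis flagP : is_flag P.

Lemma flag_total (A B : {set T}) : A \in P -> B \in P -> (A \subset B) || (B \subset A).
Proof. by case/and3P: flagP => _ _ /forall_inP PP /PP /forall_inP; apply. Qed.

Lemma flag_mem_neq0 (A : {set T}) : A \in P -> A != set0.
Proof. by case/and3P: flagP => _ P0 _; apply: contraTneq => ->. Qed.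

Lemma flag_has_min (Q : {set {set T}}) :
  Q \subset P -> Q != set0 -> exists2 A, A \in Q & forall B, B \in Q -> A \subset B.
Proof.
move=> QP /set0Pn[A0 QA0].
have [A QA minA] := @arg_minnP _ A0 (mem Q) (fun A => #|A|) QA0.
exists A => // B QB; have [PA PB] := (subsetP QP _ QA, subsetP QP _ QB).
case/orP: (flag_total PA PB) => // BA.
by have /eqP -> : B == A by rewrite eqEcard BA minA.
Qed.

Lemma flag_has_max : exists2 A, A \in P & forall B, B \in P -> B \subset A.
Proof.
case/and3P: flagP => /set0Pn[A0 PA0] _ _.
have [A PA maxA] := @arg_maxnP _ A0 (mem P) (fun A => #|A|) PA0.
exists A => // B PB.
case/orP: (flag_total PA PB) => // AB.
by have /eqP -> : A == B by rewrite eqEcard AB; apply: maxA.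
Qed.

End Flags.

Lemma chain_image_flag (k m : nat) (c : chain k m) (S : {set 'I_m.+1}) :
  S != set0 -> is_flag [set sval c q | q in S].
Proof.
move=> /set0Pn[q0 Sq0]; apply/and3P; split.
- by apply/set0Pn; exists (sval c q0); apply: imset_f.
- by apply/imsetP => -[q _ /esym/eqP]; apply/negP; apply: chain_neq0.
- apply/forall_inP => _ /imsetP[q _ ->]; apply/forall_inP => _ /imsetP[q' _ ->].
  by case: (leqP q q') => [|/ltnW] /(chain_mono c) ->; rewrite ?orbT.
Qed.

Section FlagChain.

Variable k : nat.
Implicit Types (A B : {set 'I_k.+1}) (P : {set {set 'I_k.+1}}).

Definition rank A : 'I_k.+1 := inord #|A|.-1.

Lemma rankE A : A != set0 -> rank A = #|A|.-1 :> nat.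
Proof.
rewrite -card_gt0 => A0; rewrite inordK // prednK //.
by have := max_card A; rewrite card_ord.
Qed.

(* A flag P is listed as a chain of length k in which its member of
   cardinality r sits at index r - 1: index t carries the smallest member
   with more than t elements, or the largest member if there is none. *)
Definition flag_member P (t : 'I_k.+1) : {set 'I_k.+1} :=
  if [exists A in P, t < #|A|] then \bigcap_(A in P | t < #|A|) A
  else \bigcup_(A in P) A.

Lemma flag_member_mono P (t t' : 'I_k.+1) :
  t <= t' -> flag_member P t \subset flag_member P t'.
Proof.
rewrite /flag_member => tt'.
case: ifP => [/exists_inP[A PA tA]|nt]; case: ifP => [/exists_inP[A' PA' t'A']|_] //.
- apply/bigcapsP => B /andP[PB t'B]; apply: bigcap_inf; rewrite PB.
  exact: leq_ltn_trans t'B.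
- by apply: subset_trans (bigcup_sup A PA); apply: bigcap_inf; rewrite PA.
- by move/exists_inP: nt; case; exists A' => //; apply: leq_ltn_trans t'A'.
Qed.

Lemma rank_map_proof (m : nat) (c : chain k m) :
  forall q q' : 'I_m.+1, q <= q' -> rank (sval c q) <= rank (sval c q').
Proof.
move=> q q' /(chain_mono c)/subset_leq_card qq'.
by rewrite !rankE ?chain_neq0 // -!subn1 leq_sub2r.
Qed.

Definition rank_map (m : nat) (c : chain k m) : mono m k := exist _ _ (rank_map_proof c).

Definition flag_chain P : chain k k := insubd (chainT k k) [ffun t => flag_member P t].

Definition flag_ranks P : {set 'I_k.+1} := [set rank A | A in P].

Variable P : {set {set 'I_k.+1}}.
Hypothesis flagP : is_flag P.

Lemma flag_member_in (t : 'I_k.+1) : flag_member P t \in P.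
Proof.
rewrite /flag_member; case: ifP => [/exists_inP[A0 PA0 tA0]|_].
  set Q := [set A in P | t < #|A|].
  have QP : Q \subset P by apply/subsetP => A; rewrite inE => /andP[].
  have [|A QA minA] := flag_has_min flagP QP.
    by apply/set0Pn; exists A0; rewrite inE PA0.
  move: (QA); rewrite inE => /andP[PA tA].
  suff -> : \bigcap_(B in P | t < #|B|) B = A by [].
  apply/eqP; rewrite eqEsubset (bigcap_inf A) ?PA //=.
  by apply/bigcapsP => B PB; apply: minA; rewrite inE.
have [A PA maxA] := flag_has_max flagP.
suff -> : \bigcup_(B in P) B = A by [].
by apply/eqP; rewrite eqEsubset (bigcup_sup A PA) andbT; apply/bigcupsP.
Qed.

Lemma flag_member_rank A : A \in P -> flag_member P (rank A) = A.
Proof.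
move=> PA; have A0 := flag_mem_neq0 flagP PA.
have tA : rank A < #|A| by rewrite rankE // prednK // card_gt0.
rewrite /flag_member; case: ifP => [_|/exists_inP[]]; last by exists A.
apply/eqP; rewrite eqEsubset; apply/andP; split; first by apply: bigcap_inf; rewrite PA.
apply/bigcapsP => B /andP[PB]; rewrite rankE // prednK ?card_gt0 // => AB.
case/orP: (flag_total flagP PA PB) => // BA.
by have /eqP -> : B == A by rewrite eqEcard BA.
Qed.

Lemma flag_member_chain : is_chain [ffun t => flag_member P t].
Proof.
apply/andP; split; apply/forallP => t; rewrite ?ffunE.
  exact: (flag_mem_neq0 flagP (flag_member_in t)).
by apply/forallP => t'; rewrite !ffunE; apply/implyP; apply: flag_member_mono.
Qed.

Lemma flag_chainE (t : 'I_k.+1) : sval (flag_chain P) t = flag_member P t.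
Proof. by rewrite val_insubd flag_member_chain ffunE. Qed.

Lemma flag_ranks_neq0 : flag_ranks P != set0.
Proof.
by case/and3P: flagP => /set0Pn[A PA] _ _; apply/set0Pn; exists (rank A); apply: imset_f.
Qed.

Lemma flag_chain_ranks : [set sval (flag_chain P) t | t in flag_ranks P] = P.
Proof.
rewrite -imset_comp -[RHS]imset_id; apply: eq_in_imset => A PA /=.
by rewrite flag_chainE flag_member_rank.
Qed.

Lemma chain_factor_flag_chain (m : nat) (c : chain k m) :
  (forall q, sval c q \in P) -> c = sact (rank_map c) (flag_chain P : sobj (sdDelta k) k).
Proof.
move=> cP; apply: val_inj; apply/ffunP => q /=.
by rewrite ffunE flag_chainE flag_member_rank.
Qed.

End FlagChain.

Section Ex2Sing.

Variable K : cpx.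
Local Notation Ex2 := (Ex (Ex (Sing K))).

(* The value of F : sd^2 Delta^k -> Sing K at the vertex (flag) P of
   sd^2 Delta^k, read off along the chain listing P. *)
Definition Ex2_at (k : nat) (F : sobj Ex2 k) (P : {set {set 'I_k.+1}}) : vert K :=
  Ex_at (sval F k (flag_chain P)) (flag_ranks P).

Variables (k : nat) (F : sobj Ex2 k).

Lemma Ex_at_pullback (m m' : nat) (c : chain k m) (a : mono m' m) (S : {set 'I_m'.+1}) :
  S != set0 ->
  Ex_at (sval F m' (sact a (c : sobj (sdDelta k) m))) S = Ex_at (sval F m c) (sval a @: S).
Proof. by move=> S0; rewrite (svalP F m m' a c) Ex_at_act. Qed.

Lemma Ex_at_flag_chain (m : nat) (P : {set {set 'I_k.+1}}) (c : chain k m)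
    (S : {set 'I_m.+1}) :
  is_flag P -> (forall q, sval c q \in P) -> S != set0 ->
  Ex_at (sval F m c) S = Ex_at (sval F k (flag_chain P)) (flag_ranks [set sval c q | q in S]).
Proof.
move=> flagP cP S0; rewrite {1}(chain_factor_flag_chain flagP cP) Ex_at_pullback //.
by rewrite /flag_ranks -imset_comp.
Qed.

(* Both sides factor through the chain listing the flag of all members of c. *)
Lemma Ex_at_Ex2 (m : nat) (c : chain k m) (S : {set 'I_m.+1}) :
  S != set0 -> Ex_at (sval F m c) S = Ex2_at F [set sval c q | q in S].
Proof.
move=> S0; set P := [set sval c q | q in setT]; set Q := [set sval c q | q in S].
have flagP : is_flag P by apply/chain_image_flag/setT_neq0.
have flagQ : is_flag Q by apply: chain_image_flag.
have QP q : sval (flag_chain Q) q \in P.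
  by rewrite flag_chainE //; case/imsetP: (flag_member_in flagQ q) => q' _ ->; apply: imset_f.
rewrite (Ex_at_flag_chain flagP) //; last by move=> q; apply: imset_f.
by rewrite /Ex2_at (Ex_at_flag_chain flagP QP (flag_ranks_neq0 flagQ)) flag_chain_ranks.
Qed.

Lemma Ex2_Sing_vertexwise (m l : nat) (c : chain k m) (d : chain m l) (p : 'I_l.+1) :
  sval (sval (sval F m c) l d) p = Ex2_at F [set sval c q | q in sval d p].
Proof. by rewrite Ex_Sing_vertexwise Ex_at_Ex2 ?chain_neq0. Qed.

End Ex2Sing.

Lemma Ex2_at_act (K : cpx) (k m : nat) (F : sobj (Ex (Ex (Sing K))) k) (a : mono m k)
    (P : {set {set 'I_m.+1}}) :
  is_flag P -> Ex2_at (sact a F) P = Ex2_at F [set sval a @: B | B : {set _} in P].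
Proof.
move=> flagP; rewrite /Ex2_at /= Ex_at_Ex2 ?flag_ranks_neq0 //; congr Ex2_at.
rewrite -[in RHS](flag_chain_ranks flagP) -[in RHS]imset_comp; apply: eq_imset => q /=.
by rewrite ffunE.
Qed.

Lemma imset_preimset_comp (T U W : finType) (f : T -> U) (h : U -> W) (A : {set W}) :
  injective h -> (forall w, w \in A -> exists t, h (f t) = w) ->
  f @: ((h \o f) @^-1: A) = h @^-1: A.
Proof.
move=> h_inj hA; apply/setP => u; apply/imsetP/idP => [[t]|].
  by rewrite !inE => ? ->.
rewrite inE => hu; have [t htu] := hA _ hu; exists t; first by rewrite inE /= htu.
exact: h_inj.
Qed.

Lemma preimset_flag (T W : finType) (g : T -> W) (P : {set {set W}}) :
  is_flag P -> (forall A w, A \in P -> w \in A -> exists t, g t = w) ->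
  is_flag [set g @^-1: A | A : {set W} in P].
Proof.
move=> flagP gP; have /and3P[/set0Pn[A0 PA0] _ _] := flagP.
apply/and3P; split.
- by apply/set0Pn; exists (g @^-1: A0); apply: imset_f.
- apply/imsetP => -[A PA A0g]; have /set0Pn[w Aw] := flag_mem_neq0 flagP PA.
  by have [t gtw] := gP A w PA Aw; move: (in_set0 t); rewrite A0g inE gtw Aw.
- apply/forall_inP => _ /imsetP[A PA ->]; apply/forall_inP => _ /imsetP[B PB ->].
  by case/orP: (flag_total flagP PA PB) => /(preimsetS g) ->; rewrite ?orbT.
Qed.

Definition face_flag (k : nat) (i : 'I_k.+2) (P : {set {set 'I_k.+2}}) : {set {set 'I_k.+1}} :=
  [set lift i @^-1: A | A : {set 'I_k.+2} in P].

Lemma Ex2_at_face_compat (K : cpx) (k m : nat) (F G : sobj (Ex (Ex (Sing K))) k)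
    (i i' : 'I_k.+2) (a b : mono m k) (P : {set {set 'I_k.+2}}) :
  sact a F = sact b G -> (forall t, lift i (sval a t) = lift i' (sval b t)) ->
  (forall w, w != i -> w != i' -> exists t, lift i (sval a t) = w) ->
  is_flag P -> (forall A, A \in P -> (i \notin A) && (i' \notin A)) ->
  Ex2_at F (face_flag i P) = Ex2_at G (face_flag i' P).
Proof.
move=> FG ab ab_onto flagP iP; pose g t := lift i (sval a t).
have gP A w : A \in P -> w \in A -> exists t, g t = w.
  move=> PA Aw; case/andP: (iP A PA) => iA i'A.
  by apply: ab_onto; [move: iA | move: i'A]; apply: contraNneq => <-.
have flagQ := preimset_flag flagP gP.
have faceE (h : 'I_k.+2) (c : mono m k) : (forall t, lift h (sval c t) = g t) ->
    face_flag h P = [set sval c @: B | B : {set _} in [set g @^-1: A | A : {set _} in P]].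
  move=> cg; rewrite /face_flag -imset_comp; apply: eq_in_imset => A PA /=.
  have -> : g @^-1: A = (lift h \o sval c) @^-1: A by apply/setP => t; rewrite !inE /= cg.
  apply/esym/imset_preimset_comp; first exact: lift_inj.
  by move=> w Aw; have [t gtw] := gP A w PA Aw; exists t; rewrite /= cg.
rewrite (faceE i a) // (faceE i' b) => [|t]; last by rewrite -ab.
by rewrite -(Ex2_at_act F a flagQ) -(Ex2_at_act G b flagQ) FG.
Qed.

Lemma mono_factor_lift (m k : nat) (i : 'I_k.+2) (f : mono m k.+1) :
  (forall t, sval f t != i) -> exists b : mono m k, forall t, lift i (sval b t) = sval f t.
Proof.
move=> fi; pose bf t := odflt ord0 (unlift i (sval f t)).
have bfE t : lift i (bf t) = sval f t.
  by rewrite /bf; case: unliftP => [u -> //|fit]; move: (fi t); rewrite fit eqxx.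
have bf_mono (t t' : 'I_m.+1) : t <= t' -> bf t <= bf t'.
  move=> tt'; rewrite -(leq_bump2 i).
  have bumpE u : bump i (bf u) = sval f u := congr1 val (bfE u).
  by rewrite !bumpE; apply: (svalP f).
by exists (exist _ bf bf_mono).
Qed.

Lemma mono_skip (k : nat) (h : 'I_k.+1) : 0 < k ->
  exists a : mono k k, (forall t, sval a t != h) /\ (forall t, t != h -> sval a t = t).
Proof.
move=> k0; pose s (t : nat) := if t == h then (if h < k then h.+1 else h.-1) else t.
have hk : h <= k := ltn_ord h.
have s_le (t : 'I_k.+1) : s t < k.+1.
  by have := ltn_ord t; rewrite /s; case: (_ =P _) => ?; case: (ltnP h k) => ?; lia.
pose af t : 'I_k.+1 := Ordinal (s_le t).
have af_mono (t t' : 'I_k.+1) : t <= t' -> af t <= af t'.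
  have := ltn_ord t'; rewrite /= /s.
  by case: (_ =P _) => ?; case: (_ =P _) => ?; case: (ltnP h k) => ?; lia.
exists (exist _ af af_mono); split => [t|t th] /=.
  by rewrite -val_eqE /= /s; case: (@eqP nat t h) => ?; case: (ltnP h k) => ?; lia.
by apply: val_inj; rewrite /= /s val_eqE (negbTE th).
Qed.

Lemma codim2_degeneracies (k : nat) (i i' : 'I_k.+2) : i != i' -> 0 < k ->
  exists a b : mono k k, (forall t, lift i (sval a t) = lift i' (sval b t)) /\
    (forall w, w != i -> w != i' -> exists t, lift i (sval a t) = w).
Proof.
move=> ii' k0; case: (unliftP i i') ii' => [h -> _|->]; last by rewrite eqxx.
have [a [ah a_id]] := mono_skip h k0.
have [|b ba] := mono_factor_lift (i := lift i h) (f := mono_comp a (coface i)).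
  by move=> t; rewrite /= (inj_eq lift_inj); apply: ah.
exists a, b; split => [t|w wi wh]; first by rewrite ba.
case: (unliftP i w) wi => [v wv _|->]; last by rewrite eqxx.
by subst w; exists v; rewrite a_id //; apply: contraNneq wh => ->.
Qed.

Definition full (K : cpx) : Prop := forall s : {fset vert K}, s != fset0 -> simplex s.

Lemma full_simplicial (K : cpx) (l : nat) (g : 'I_l.+1 -> vert K) :
  full K -> simplicial (DeltaC l) K g.
Proof.
move=> K_full s /fset0Pn[v sv]; apply: K_full; apply/fset0Pn; exists (g v).
exact: in_imfset.
Qed.

Section HornFiller.

Variables (K : cpx) (k : nat) (j : 'I_k.+2) (x : 'I_k.+2 -> sobj (Ex (Ex (Sing K))) k).
Hypothesis K_full : full K.
Hypothesis x_horn : forall (i i' : 'I_k.+2) (m : nat) (a b : mono m k),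
  i != j -> i' != j -> sval (mono_comp a (coface i)) =1 sval (mono_comp b (coface i')) ->
  sact a (x i) = sact b (x i').

Lemma horn_face_flags_agree (i i' : 'I_k.+2) (P : {set {set 'I_k.+2}}) :
  i != j -> i' != j -> is_flag P -> (forall A, A \in P -> (i \notin A) && (i' \notin A)) ->
  Ex2_at (x i) (face_flag i P) = Ex2_at (x i') (face_flag i' P).
Proof.
move=> ij i'j flagP iP; have [<- //|ii'] := eqVneq i i'.
have k0 : 0 < k.
  by move: (ltn_ord i) (ltn_ord i') (ltn_ord j) ii' ij i'j; rewrite -!val_eqE /=; lia.
have [a [b [ab ab_onto]]] := codim2_degeneracies ii' k0.
exact: Ex2_at_face_compat (x_horn ij i'j ab) ab ab_onto flagP iP.
Qed.

(* Some i != j lying in no member of P; the default j is junk, used only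
   when there is none (x j is not part of the horn). *)
Definition filler_index (P : {set {set 'I_k.+2}}) : 'I_k.+2 :=
  odflt j [pick i | (i != j) && [forall A in P, i \notin A]].

Lemma filler_indexP (P : {set {set 'I_k.+2}}) (i : 'I_k.+2) :
  i != j -> (forall A, A \in P -> i \notin A) ->
  filler_index P != j /\ forall A, A \in P -> filler_index P \notin A.
Proof.
move=> ij iP; rewrite /filler_index; case: pickP => [i' /andP[-> /forall_inP //]|none].
by move: (none i); rewrite ij /=; move/negbT/forall_inPn => [A /iP ->].
Qed.

Definition filler_vertex (P : {set {set 'I_k.+2}}) : vert K :=
  Ex2_at (x (filler_index P)) (face_flag (filler_index P) P).

Definition filler_Sing (m : nat) (c : chain k.+1 m) (l : nat) (d : chain m l) : sobj (Sing K) l :=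
  exist _ (fun p => filler_vertex [set sval c q | q in sval d p]) (full_simplicial _ K_full).

Lemma filler_Sing_natural (m : nat) (c : chain k.+1 m) :
  natural (A := sdDelta m) (X := Sing K) (filler_Sing c).
Proof. by move=> l l' a d; apply: Sing_ext => p /=; rewrite ffunE. Qed.

Definition filler_Ex (m : nat) (c : chain k.+1 m) : sobj (Ex (Sing K)) m :=
  exist _ _ (filler_Sing_natural c).

Lemma filler_Ex_natural : natural (A := sdDelta k.+1) (X := Ex (Sing K)) filler_Ex.
Proof.
move=> m m' a c; apply: Ex_ext => l d; apply: Sing_ext => p /=.
by rewrite ffunE -imset_comp; congr filler_vertex; apply: eq_imset => q; rewrite /= ffunE.
Qed.

Definition filler : sobj (Ex (Ex (Sing K))) k.+1 := exist _ _ filler_Ex_natural.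

Lemma filler_face (i : 'I_k.+2) : i != j -> sact (coface i) filler = x i.
Proof.
move=> ij; apply: Ex_ext => m c; apply: Ex_ext => l d; apply: Sing_ext => p.
rewrite [RHS]Ex2_Sing_vertexwise /=.
set P := [set sval (sd_map (coface i) c) q | q in sval d p].
have flagP : is_flag P by apply/chain_image_flag/chain_neq0.
have iP A : A \in P -> i \notin A.
  case/imsetP=> q _ ->; rewrite ffunE; apply/imsetP => -[u _ /eqP].
  by rewrite (negbTE (neq_lift i u)).
have faceP : face_flag i P = [set sval c q | q in sval d p].
  rewrite /face_flag -imset_comp; apply: eq_imset => q /=.
  by rewrite ffunE; apply/setP => u; rewrite inE mem_imset //; apply: lift_inj.
have [i'j i'P] := filler_indexP ij iP.
rewrite -faceP /filler_vertex; apply: horn_face_flags_agree => // A PA.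
by rewrite i'P ?iP.
Qed.

End HornFiller.

Lemma Ex2_Sing_full_Kan (K : cpx) : full K -> Kan (Ex (Ex (Sing K))).
Proof.
by move=> K_full k j x x_horn; exists (filler j x K_full) => i; apply: filler_face.
Qed.

Theorem lemma6p2 : forall n : nat, Kan (Ex (Ex (Sing (DeltaC n)))).
Proof. by move=> n; apply: Ex2_Sing_full_Kan => s. Qed.
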